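(* Let $J\subseteq[n]$ and let $w,w'\in W$ satisfy $W_Jw=W_Jw'$. Then for every $i\in\{0,1,\dots,n\}$ we have $W_J\,\sigma_i(w)=W_J\,\sigma_i(w')$.
   Context: Let $\Phi$ be an irreducible (crystallographic) root system of rank $n$ with simple roots $\alpha_1,\dots,\alpha_n$, and let $\alpha_0$ be the highest root with respect to this simple system. For $i\in\{0,\dots,n\}$ let $t_i$ be the reflection in the hyperplane orthogonal to $\alpha_i$. The Weyl group $W$ is generated by $t_1,\dots,t_n$, and $\ell$ is the length function with respect to $t_1,\dots,t_n$. For $w\in W$ and $1\le i\le n$, $\sigma_i(w)=w$ if $\ell(wt_i)>\ell(w)$ and $\sigma_i(w)=wt_i$ otherwise; $\sigma_0(w)=w$ if $\ell(wt_0)<\ell(w)$ and $\sigma_0(w)=wt_0$ otherwise. For $J\subseteq[n]$ (so $0\notin J$), $W_J$ is the subgroup of $W$ generated by $\{t_j:j\in J\}$, and $W_Jw$ denotes a right coset. *)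

From mathcomp Require Import all_boot all_order all_algebra.
From Stdlib Require Import ClassicalEpsilon.
Set Implicit Arguments. Unset Strict Implicit. Unset Printing Implicit Defensive.
Import Order.TTheory GRing.Theory Num.Theory.
Local Open Scope ring_scope.

Section RootSystems.
Variables (R : realFieldType) (n : nat).

Definition dot (u v : 'cV[R]_n) : R := (u^T *m v) 0 0.

(* Matrix of the orthogonal reflection in the hyperplane orthogonal to a:
   v |-> v - (2 (v,a)/(a,a)) a, acting by M *m v (so products of matrices
   are compositions of maps). *)
Definition refl_mx (a : 'cV[R]_n) : 'M[R]_n :=
  1%:M - (2 / dot a a) *: (a *m a^T).

Definition root_system (Phi : seq 'cV[R]_n) : Prop :=
  [/\ 0 \notin Phi,
      (forall v : 'cV[R]_n, exists c : 'I_(size Phi) -> R,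
          v = \sum_(k < size Phi) c k *: Phi`_k),
      (forall a b, a \in Phi -> b \in Phi -> refl_mx a *m b \in Phi),
      (forall a b, a \in Phi -> b \in Phi ->
          exists z : int, 2 * dot a b / dot a a = z%:~R)
    & (forall a (c : R), a \in Phi -> c *: a \in Phi -> c = 1 \/ c = -1)].

Definition irreducible_rs (Phi : seq 'cV[R]_n) : Prop :=
  ~ exists P : pred 'cV[R]_n,
      [/\ exists2 a, a \in Phi & P a,
          exists2 a, a \in Phi & ~~ P a
        & forall a b, a \in Phi -> b \in Phi -> P a -> ~~ P b -> dot a b = 0].

Definition simple_system (Phi : seq 'cV[R]_n) (simple : 'I_n -> 'cV[R]_n) : Prop :=
  [/\ forall j, simple j \in Phi,
      (forall c : 'I_n -> R, \sum_j c j *: simple j = 0 -> forall j, c j = 0)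
    & forall b, b \in Phi -> exists c : 'I_n -> int,
        ((forall j, 0 <= c j) \/ (forall j, c j <= 0)) /\
        b = \sum_j (c j)%:~R *: simple j].

Definition highest_root (Phi : seq 'cV[R]_n) (simple : 'I_n -> 'cV[R]_n)
    (a0 : 'cV[R]_n) : Prop :=
  a0 \in Phi /\ forall b, b \in Phi -> exists c : 'I_n -> int,
      (forall j, 0 <= c j) /\ a0 - b = \sum_j (c j)%:~R *: simple j.

(* Indices {0,...,n} are 'I_n.+1; alpha ord0 is the highest root and
   alpha i (i <> 0) are the simple roots; t i is the reflection in alpha i. *)
Variable alpha : 'I_n.+1 -> 'cV[R]_n.

Definition t (i : 'I_n.+1) : 'M[R]_n := refl_mx (alpha i).

Definition wprod (s : seq 'I_n.+1) : 'M[R]_n :=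
  foldr (fun i acc => t i *m acc) 1%:M s.

Definition nonzero_word (s : seq 'I_n.+1) : bool := all (fun i => i != ord0) s.

(* Weyl group W = < t_1, ..., t_n > (the t_i are involutions, so the
   monoid generated equals the group generated). *)
Definition inW (w : 'M[R]_n) : Prop :=
  exists s, nonzero_word s /\ wprod s = w.

(* Length with respect to t_1, ..., t_n (0 outside W, never used there). *)
Definition has_word_of_size (w : 'M[R]_n) : pred nat :=
  fun k => [exists s : k.-tuple 'I_n.+1, nonzero_word s && (wprod s == w)].

Definition ell (w : 'M[R]_n) : nat :=
  match excluded_middle_informative (exists k, has_word_of_size w k) with
  | left h => ex_minn h
  | right _ => 0%N
  end.

Definition sigma (i : 'I_n.+1) (w : 'M[R]_n) : 'M[R]_n :=
  if i == ord0 then (if (ell (w *m t i) < ell w)%N then w else w *m t i)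
  else (if (ell w < ell (w *m t i))%N then w else w *m t i).

Definition inWJ (J : {set 'I_n.+1}) (u : 'M[R]_n) : Prop :=
  exists s, all (fun i => i \in J) s /\ wprod s = u.

Definition rcosetJ (J : {set 'I_n.+1}) (w : 'M[R]_n) : 'M[R]_n -> Prop :=
  fun M => exists2 u, inWJ J u & M = u *m w.

Definition same_rcoset (J : {set 'I_n.+1}) (w w' : 'M[R]_n) : Prop :=
  forall M, rcosetJ J w M <-> rcosetJ J w' M.

End RootSystems.

(* sigma_i(w) is w or w t_i according to the sign of the root w alpha_i
   (reversed for the highest root alpha_0), because l(w t_b) < l(w) exactly
   when w b is negative (exchange property).  Write w' = v w with v in W_J.
   If w alpha_i and v w alpha_i have the same sign, then
   sigma_i(w') = v sigma_i(w).  Otherwise v changes the sign of the positive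
   root b = +-w alpha_i; as W_J only alters the coordinates of a root along
   the simple roots indexed by J, b is supported on J, so t_b = w t_i w^-1
   lies in W_J and w, w t_i, w', w' t_i all lie in the same coset. *)

From mathcomp Require Import all_boot all_order all_algebra.
From mathcomp Require Import zify.
From Stdlib Require Import ClassicalEpsilon.
Import Order.TTheory GRing.Theory Num.Theory.
Local Open Scope ring_scope.
Set Implicit Arguments. Unset Strict Implicit. Unset Printing Implicit Defensive.

Section Euclidean.
Variables (R : realFieldType) (n : nat).
Implicit Types (a b u v : 'cV[R]_n) (M : 'M[R]_n).

Lemma dotE u v : dot u v = \sum_k u k 0 * v k 0.
Proof. by rewrite /dot !mxE; apply: eq_bigr => k _; rewrite mxE. Qed.

Lemma dot_suml (I : finType) (x : I -> R) (v : I -> 'cV[R]_n) u :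
  dot (\sum_k x k *: v k) u = \sum_k x k * dot (v k) u.
Proof.
rewrite dotE (eq_bigr (fun i => \sum_k x k * v k i 0 * u i 0)); last first.
  by move=> i _; rewrite summxE mulr_suml; apply: eq_bigr => k _; rewrite mxE.
rewrite exchange_big /=; apply: eq_bigr => k _.
by rewrite dotE mulr_sumr; apply: eq_bigr => i _; rewrite mulrA.
Qed.

Lemma dot_gt0 a : a != 0 -> 0 < dot a a.
Proof.
have sq_ge0 k : 0 <= a k 0 * a k 0 by rewrite -expr2 sqr_ge0.
move=> a0; rewrite dotE lt_def sumr_ge0 // andbT.
apply: contra a0 => /eqP /psumr_eq0P a_eq0; apply/eqP/matrixP => i j.
by rewrite (ord1 j) mxE; apply/eqP; rewrite -sqrf_eq0 expr2 a_eq0.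
Qed.

Lemma mulmx_trE u v : u^T *m v = (dot u v)%:M.
Proof. exact: mx11_scalar. Qed.

Lemma refl_mxE a b : refl_mx a *m b = b - (2 * dot a b / dot a a) *: a.
Proof.
rewrite /refl_mx mulmxBl mul1mx -scalemxAl -mulmxA mulmx_trE mul_mx_scalar.
by rewrite scalerA mulrAC.
Qed.

Lemma refl_mx_self a : a != 0 -> refl_mx a *m a = - a.
Proof.
move=> a0; rewrite refl_mxE mulfK ?lt0r_neq0 ?dot_gt0 //.
by rewrite scaler_nat mulr2n opprD addrA subrr sub0r.
Qed.

Lemma refl_mxN a : refl_mx (- a) = refl_mx a.
Proof.
have dotNN : dot (- a) (- a) = dot a a.
  by rewrite !dotE; apply: eq_bigr => k _; rewrite !mxE mulrNN.
by rewrite /refl_mx dotNN linearN /= mulNmx mulmxN opprK.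
Qed.

Lemma trmx_refl a : (refl_mx a)^T = refl_mx a.
Proof. by rewrite /refl_mx linearB /= trmx1 linearZ /= trmx_mul trmxK. Qed.

Lemma refl_mxK a : a != 0 -> refl_mx a *m refl_mx a = 1%:M.
Proof.
move=> /dot_gt0 /lt0r_neq0 a0; set k := 2 / dot a a.
have aaT2 : a *m a^T *m (a *m a^T) = dot a a *: (a *m a^T).
  by rewrite mulmxA -(mulmxA a) mulmx_trE mul_mx_scalar scalemxAl.
have kk : k * (k * dot a a) = k + k by rewrite mulfVK // -mulr2n mulr_natr.
rewrite /refl_mx -/k mulmxBl mul1mx mulmxBr mulmx1 -scalemxAl -scalemxAr aaT2.
by rewrite !scalerA -mulrA kk scalerDl opprB addrK subrK.
Qed.

Lemma dot_orth M u v : M^T *m M = 1%:M -> dot (M *m u) (M *m v) = dot u v.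
Proof. by move=> MTM; rewrite /dot trmx_mul mulmxA -(mulmxA u^T) MTM mulmx1. Qed.

Lemma refl_conj M b : M^T *m M = 1%:M -> M *m refl_mx b *m M^T = refl_mx (M *m b).
Proof.
move=> MTM; rewrite /refl_mx dot_orth // mulmxBr mulmx1 mulmxBl (mulmx1C MTM).
by rewrite -scalemxAr -scalemxAl trmx_mul !mulmxA.
Qed.

End Euclidean.

Section WeylWords.
Variables (R : realFieldType) (n : nat) (alpha : 'I_n.+1 -> 'cV[R]_n).
Hypothesis alpha_neq0 : forall i, alpha i != 0.
Implicit Types (s : seq 'I_n.+1) (J : {set 'I_n.+1}) (b : 'cV[R]_n) (u w x y z : 'M[R]_n).

Lemma wprod_cat s1 s2 : wprod alpha (s1 ++ s2) = wprod alpha s1 *m wprod alpha s2.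
Proof. by elim: s1 => [|i s IH] /=; rewrite ?mul1mx // IH mulmxA. Qed.

Lemma tK i : alpha i != 0 -> t alpha i *m t alpha i = 1%:M.
Proof. exact: refl_mxK. Qed.

Lemma trmx_t i : (t alpha i)^T = t alpha i.
Proof. exact: trmx_refl. Qed.

Lemma trmx_wprod s : (wprod alpha s)^T = wprod alpha (rev s).
Proof.
elim: s => [|i s IH] /=; first by rewrite trmx1.
by rewrite trmx_mul IH trmx_t rev_cons -cats1 wprod_cat /= mulmx1.
Qed.

Lemma wprod_orth s : (wprod alpha s)^T *m wprod alpha s = 1%:M.
Proof.
elim: s => [|i s IH] /=; first by rewrite trmx1 mulmx1.
by rewrite trmx_mul trmx_t -mulmxA (mulmxA (t alpha i)) tK // mul1mx.
Qed.

Lemma refl_conj_t i b : alpha i != 0 ->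
  refl_mx (t alpha i *m b) = t alpha i *m refl_mx b *m t alpha i.
Proof. by move=> ai0; rewrite -refl_conj trmx_t ?tK. Qed.

Lemma wprod_refl s b :
  wprod alpha s *m refl_mx b = refl_mx (wprod alpha s *m b) *m wprod alpha s.
Proof. by rewrite -refl_conj ?wprod_orth // -mulmxA wprod_orth mulmx1. Qed.

Lemma inWJ_mul J u v : inWJ alpha J u -> inWJ alpha J v -> inWJ alpha J (u *m v).
Proof.
move=> [su [Jsu <-]] [sv [Jsv <-]].
by exists (su ++ sv); rewrite all_cat Jsu Jsv wprod_cat.
Qed.

Lemma inWJ_trmx J u : inWJ alpha J u -> inWJ alpha J u^T.
Proof. by move=> [s [Js <-]]; exists (rev s); rewrite all_rev trmx_wprod. Qed.

Lemma same_rcoset_sym J x y : same_rcoset alpha J x y -> same_rcoset alpha J y x.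
Proof. by move=> xy M; rewrite xy. Qed.

Lemma same_rcoset_trans J x y z :
  same_rcoset alpha J x y -> same_rcoset alpha J y z -> same_rcoset alpha J x z.
Proof. by move=> xy yz M; rewrite xy yz. Qed.

Lemma same_rcoset_mull J u x : inWJ alpha J u -> same_rcoset alpha J x (u *m x).
Proof.
move=> Ju M; split=> [[v Jv ->]|[v Jv ->]].
  exists (v *m u^T); first exact/inWJ_mul/inWJ_trmx.
  have [s [_ <-]] := Ju.
  by rewrite mulmxA -(mulmxA v) wprod_orth mulmx1.
by exists (v *m u); [apply: inWJ_mul | rewrite mulmxA].
Qed.

Lemma sigma_same_rcoset J i x :
  same_rcoset alpha J x (x *m t alpha i) -> same_rcoset alpha J (sigma alpha i x) x.
Proof.
move=> xxt; rewrite /sigma.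
by do 2?case: ifP => _; apply: same_rcoset_sym.
Qed.

Lemma same_rcoset_mul_t J w i :
  inW alpha w -> inWJ alpha J (refl_mx (w *m alpha i)) ->
  same_rcoset alpha J w (w *m t alpha i).
Proof. by move=> [s [_ <-]] Jr; rewrite /t wprod_refl; apply: same_rcoset_mull. Qed.

Lemma ell_le_size w s : nonzero_word s -> wprod alpha s = w -> (ell alpha w <= size s)%N.
Proof.
move=> s0 sw; have ws : has_word_of_size alpha w (size s).
  by apply/existsP; exists (in_tuple s); rewrite /= s0 sw eqxx.
rewrite /ell; case: excluded_middle_informative => [h|[]]; last by exists (size s).
by case: ex_minnP => m _; apply.
Qed.

Lemma ell_word w : inW alpha w ->
  exists s, [/\ nonzero_word s, size s = ell alpha w & wprod alpha s = w].
Proof.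
move=> [s0 [s00 s0w]]; rewrite /ell; case: excluded_middle_informative => [h|[]].
  case: ex_minnP => m /existsP [s /andP [nzs /eqP sw]] _.
  by exists s; rewrite size_tuple.
exists (size s0); apply/existsP; exists (in_tuple s0).
by rewrite /= s00 s0w eqxx.
Qed.

End WeylWords.

Section PositiveRoots.
Variables (R : realFieldType) (n : nat) (Phi : seq 'cV[R]_n).
Variable alpha : 'I_n.+1 -> 'cV[R]_n.
Local Notation a j := (alpha (lift ord0 j)).
Hypothesis Phi_root : root_system Phi.
Hypothesis alpha_simple : simple_system Phi (fun j => a j).
Hypothesis alpha0_highest : highest_root Phi (fun j => a j) (alpha ord0).
Implicit Types (b g : 'cV[R]_n) (c d : 'I_n -> int) (j k : 'I_n).
Implicit Types (s : seq 'I_n.+1) (J : {set 'I_n.+1}) (v w : 'M[R]_n).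

Definition int_comb c : 'cV[R]_n := \sum_j (c j)%:~R *: a j.

Definition positive b := exists2 c, (forall j, 0 <= c j) & b = int_comb c.

Lemma int_comb_inj c d : int_comb c = int_comb d -> c =1 d.
Proof.
move=> cd j; case: alpha_simple => _ indep _.
apply/eqP; rewrite -(eqr_int R) -subr_eq0; apply/eqP; move: j.
apply: (indep (fun j => (c j)%:~R - (d j)%:~R)).
rewrite (eq_bigr (fun j => (c j)%:~R *: a j - (d j)%:~R *: a j)) => [|k _].
  by rewrite sumrB -/(int_comb c) cd subrr.
by rewrite scalerBl.
Qed.

Lemma int_combN c : - int_comb c = int_comb (fun j => - c j).
Proof. by rewrite /int_comb -sumrN; apply: eq_bigr => j _; rewrite mulrNz scaleNr. Qed.

Lemma int_combD c d : int_comb c + int_comb d = int_comb (fun j => c j + d j).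
Proof.
by rewrite /int_comb -big_split; apply: eq_bigr => j _; rewrite intrD scalerDl.
Qed.

Lemma int_comb_delta j c (z : int) :
  int_comb (fun k => c k - z *+ (k == j)) = int_comb c - z%:~R *: a j.
Proof.
have delta : \sum_k (z *+ (k == j))%:~R *: a k = z%:~R *: a j.
  rewrite (bigD1 j) //= eqxx mulr1n big1 ?addr0 // => k /negbTE ->.
  by rewrite mulr0n scale0r.
rewrite -delta /int_comb -sumrB; apply: eq_bigr => k _.
by rewrite intrB scalerBl.
Qed.

Lemma simple_Phi j : a j \in Phi.
Proof. by case: alpha_simple. Qed.

Lemma alpha_Phi i : alpha i \in Phi.
Proof.
by case: (unliftP ord0 i) => [j ->|->]; [apply: simple_Phi | case: alpha0_highest].
Qed.

Lemma Phi_neq0 b : b \in Phi -> b != 0.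
Proof. by case: Phi_root => Phi0 _ _ _ _; apply: contraTneq => ->. Qed.

Lemma simple_neq0 j : a j != 0.
Proof. exact/Phi_neq0/simple_Phi. Qed.

Lemma alpha_neq0 i : alpha i != 0.
Proof. exact/Phi_neq0/alpha_Phi. Qed.

Lemma t_Phi i b : alpha i \in Phi -> b \in Phi -> t alpha i *m b \in Phi.
Proof. by case: Phi_root => _ _ reflPhi _ _; apply: reflPhi. Qed.

Lemma wprod_Phi s b : b \in Phi -> wprod alpha s *m b \in Phi.
Proof.
move=> bPhi; elim: s => [|i s IH] /=; first by rewrite mul1mx.
by rewrite -mulmxA t_Phi ?alpha_Phi.
Qed.

Lemma oppr_Phi b : b \in Phi -> - b \in Phi.
Proof.
case: Phi_root => _ _ reflPhi _ _ bPhi.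
by rewrite -refl_mx_self ?reflPhi ?Phi_neq0.
Qed.

Lemma Phi_int_comb b : b \in Phi ->
  exists2 c, b = int_comb c & (forall j, 0 <= c j) \/ (forall j, c j <= 0).
Proof. by case: alpha_simple => _ _ /[apply] -[c [c_sign ->]]; exists c. Qed.

Lemma cartan_int j b : b \in Phi ->
  exists z : int, 2 * dot (a j) b / dot (a j) (a j) = z%:~R.
Proof. by case: Phi_root => _ _ _ cartan _; apply/cartan/simple_Phi. Qed.

Lemma t_int_comb j c (z : int) :
  2 * dot (a j) (int_comb c) / dot (a j) (a j) = z%:~R ->
  t alpha (lift ord0 j) *m int_comb c = int_comb (fun k => c k - z *+ (k == j)).
Proof. by move=> cz; rewrite int_comb_delta /t refl_mxE cz. Qed.

Lemma positive_add b g : positive b -> positive g -> positive (b + g).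
Proof.
move=> [c c_ge0 ->] [d d_ge0 ->]; rewrite int_combD.
by exists (fun j => c j + d j) => // j; rewrite addr_ge0.
Qed.

Lemma positive_or_negative b : b \in Phi -> positive b \/ positive (- b).
Proof.
move=> /Phi_int_comb [c -> [c_ge0|c_le0]]; first by left; exists c.
by right; rewrite int_combN; exists (fun j => - c j) => // j; rewrite oppr_ge0.
Qed.

Lemma positive_antisym b : positive b -> positive (- b) -> b = 0.
Proof.
move=> [c c_ge0 bc] [d d_ge0]; rewrite bc int_combN => /int_comb_inj cd.
rewrite /int_comb big1 // => j _.
suff -> : c j = 0 by rewrite scale0r.
by apply/eqP; rewrite eq_le c_ge0 andbT -oppr_ge0 cd.
Qed.

Lemma positive_root_contra b : b \in Phi -> positive b -> ~ positive (- b).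
Proof.
by move=> /Phi_neq0 b0 bP /(positive_antisym bP) b_eq0; rewrite b_eq0 eqxx in b0.
Qed.

Lemma positive_simple j : positive (a j).
Proof.
exists (fun k => (k == j)%:Z) => [k|]; first by case: (k == j).
rewrite /int_comb (bigD1 j) //= eqxx scale1r big1 ?addr0 // => k /negbTE ->.
by rewrite scale0r.
Qed.

Lemma positive_root_single j b c : b \in Phi -> (forall k, 0 <= c k) ->
  b = int_comb c -> (forall k, k != j -> c k = 0) -> b = a j.
Proof.
move=> bPhi c_ge0 bc c0.
have bcj : b = (c j)%:~R *: a j.
  rewrite bc /int_comb (bigD1 j) //= big1 ?addr0 // => k /c0 ->.
  by rewrite scale0r.
case: Phi_root => _ _ _ _ reduced.
move: (bPhi); rewrite bcj => /(reduced _ _ (simple_Phi j)) [cj1|cjN1].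
  by rewrite cj1 scale1r.
by have := c_ge0 j; rewrite -(ler0z R) cjN1 ler0N1.
Qed.

Lemma positive_t_simple j b : b \in Phi -> positive b -> b != a j ->
  positive (t alpha (lift ord0 j) *m b).
Proof.
move=> bPhi [c c_ge0 bc] bNa.
have /existsP [k /andP [kj ck]] : [exists k, (k != j) && (0 < c k)].
  apply: contraNT bNa => /existsPn c_le0; apply/eqP.
  apply: (positive_root_single bPhi c_ge0 bc) => k kj.
  by have := c_le0 k; rewrite kj -leNgt => ck; apply/eqP; rewrite eq_le ck c_ge0.
have tbPhi := t_Phi (simple_Phi j) bPhi.
have [z cz] := cartan_int j bPhi.
rewrite bc in tbPhi cz *; rewrite (t_int_comb cz) in tbPhi *.
have [e tbe [e_ge0|e_le0]] := Phi_int_comb tbPhi; first by exists e.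
have := e_le0 k; rewrite -(int_comb_inj tbe k) (negbTE kj) mulr0n subr0.
by rewrite leNgt ck.
Qed.

Lemma positive_highest : positive (alpha ord0).
Proof.
case: alpha0_highest => a0Phi highest.
have [//|a0N] := positive_or_negative a0Phi.
rewrite -[alpha ord0](subrK (- alpha ord0)); apply: positive_add a0N.
by have [c [c_ge0 a0c]] := highest _ (oppr_Phi a0Phi); exists c.
Qed.

Lemma positive_alpha i : positive (alpha i).
Proof.
case: (unliftP ord0 i) => [j ->|->]; [exact: positive_simple | exact: positive_highest].
Qed.

Lemma exists_simple_dot_gt0 b c : b != 0 -> (forall k, 0 <= c k) ->
  b = int_comb c -> exists j, 0 < c j /\ 0 < dot (a j) b.
Proof.
move=> b0 c_ge0 bc.
suff /existsP [j /andP cj_dj] : [exists j, (0 < c j) && (0 < dot (a j) b)] by exists j.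
apply: contraTT (dot_gt0 b0) => /existsPn none; rewrite -leNgt {1}bc dot_suml.
apply: sumr_le0 => k _; have := none k; rewrite negb_and -!leNgt => /orP [ck|dk].
  by rewrite (_ : c k = 0) ?mul0r //; apply/eqP; rewrite eq_le ck c_ge0.
by rewrite mulr_ge0_le0 ?ler0z.
Qed.

(* Induction on the height: some a_j with c_j > 0 has (a_j, b) > 0, so
   t_j b is a positive root of smaller height, and t_b = t_j t_(t_j b) t_j. *)
Lemma refl_positive_root_word (P : pred 'I_n.+1) b c :
  b \in Phi -> (forall k, 0 <= c k) -> b = int_comb c ->
  (forall k, c k != 0 -> P (lift ord0 k)) ->
  exists s, all P s /\ wprod alpha s = refl_mx b.
Proof.
have [N] := ubnP `|(\sum_k c k)%R|%N; elim: N => // N IH in b c *.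
rewrite ltnS => c_height bPhi c_ge0 bc c_supp.
have [j [cj_gt0 dj_gt0]] := exists_simple_dot_gt0 (Phi_neq0 bPhi) c_ge0 bc.
have Pj : P (lift ord0 j) by apply/c_supp/lt0r_neq0.
have [->|bNa] := eqVneq b (a j).
  by exists [:: lift ord0 j]; rewrite /= Pj mulmx1.
have [z cz] := cartan_int j bPhi.
have z_gt0 : 0 < z.
  by rewrite -(ltr0z R) -cz divr_gt0 ?mulr_gt0 ?dot_gt0 ?simple_neq0.
pose c' k := c k - z *+ (k == j).
have tbc' : t alpha (lift ord0 j) *m b = int_comb c'.
  by rewrite bc (t_int_comb (z := z)) // -bc.
have c'_ge0 k : 0 <= c' k.
  have bP : positive b by exists c.
  have [e e_ge0 tbe] := positive_t_simple bPhi bP bNa.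
  by rewrite (int_comb_inj (etrans (esym tbc') tbe)).
have [s [Ps Es]] :
    exists s, all P s /\ wprod alpha s = refl_mx (t alpha (lift ord0 j) *m b).
  apply: (IH _ c') => //; last 2 first.
  - exact: t_Phi (simple_Phi j) bPhi.
  - move=> k; rewrite /c'; case: (eqVneq k j) => [->|_] //.
    by rewrite mulr0n subr0; apply: c_supp.
  have sum_c' : \sum_k c' k = \sum_k c k - z.
    rewrite /c' sumrB; congr (_ - _).
    by rewrite (bigD1 j) //= eqxx mulr1n big1 ?addr0 // => k /negbTE ->.
  have : 0 <= \sum_k c' k by apply: sumr_ge0 => k _; apply: c'_ge0.
  rewrite sum_c'; move: c_height; lia.
exists (lift ord0 j :: s ++ [:: lift ord0 j]); split.
  by rewrite /= Pj all_cat Ps /= Pj.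
rewrite /= wprod_cat Es refl_conj_t ?simple_neq0 // /= mulmx1.
by rewrite !mulmxA tK ?simple_neq0 // mul1mx -mulmxA tK ?simple_neq0 // mulmx1.
Qed.

Lemma t_inW i : inW alpha (t alpha i).
Proof.
have [c c_ge0 ic] := positive_alpha i.
have [|s [s0 Es]] := refl_positive_root_word (P := fun i => i != ord0)
  (alpha_Phi i) c_ge0 ic; last by exists s; split.
by move=> k _; rewrite eq_sym neq_lift.
Qed.

Lemma exchange s b : nonzero_word s -> b \in Phi -> positive b ->
  positive (- (wprod alpha s *m b)) ->
  exists s', [/\ nonzero_word s', (size s' < size s)%N &
                 wprod alpha s' = wprod alpha s *m refl_mx b].
Proof.
move=> + bPhi bP; elim: s => [|i s IH] /=.
  by rewrite mul1mx => _ /(positive_root_contra bPhi bP).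
case/andP=> i0 s0; rewrite -mulmxA => tsbN.
have sbPhi := wprod_Phi s bPhi.
have [sbP|sbN] := positive_or_negative sbPhi; last first.
  have [s' [s'0 lt_s' Es']] := IH s0 sbN.
  by exists (i :: s'); rewrite /= i0 s'0 Es' mulmxA.
case: (unliftP ord0 i) i0 tsbN => [j ->|->]; last by rewrite eqxx.
move=> _ tsbN; have [sba|] := eqVneq (wprod alpha s *m b) (a j); last first.
  move/(positive_t_simple sbPhi sbP) => tsbP.
  by case: (positive_root_contra (t_Phi (simple_Phi j) sbPhi) tsbP).
exists s; split => //.
by rewrite -mulmxA (wprod_refl alpha_neq0) sba mulmxA tK ?simple_neq0 // mul1mx.
Qed.

Lemma ell_refl_lt w b : inW alpha w -> b \in Phi -> positive b ->
  positive (- (w *m b)) -> (ell alpha (w *m refl_mx b) < ell alpha w)%N.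
Proof.
move=> Ww bPhi bP; have [s [s0 <- sw]] := ell_word Ww; rewrite -sw => wbN.
have [s' [s'0 lt_s's Es']] := exchange s0 bPhi bP wbN.
exact: leq_ltn_trans (ell_le_size s'0 Es') lt_s's.
Qed.

Lemma ell_t_lt w i : inW alpha w -> positive (- (w *m alpha i)) ->
  (ell alpha (w *m t alpha i) < ell alpha w)%N.
Proof. by move=> Ww; apply: ell_refl_lt Ww (alpha_Phi i) (positive_alpha i). Qed.

Lemma ell_t_gt w i : inW alpha w -> positive (w *m alpha i) ->
  (ell alpha w < ell alpha (w *m t alpha i))%N.
Proof.
move=> [s [s0 sw]] wP; have [st [st0 Est]] := t_inW i.
have Wwt : inW alpha (w *m t alpha i).
  exists (s ++ st); rewrite wprod_cat sw Est; split => //.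
  by rewrite /nonzero_word all_cat; apply/andP.
move: (ell_t_lt (i := i) Wwt).
rewrite -[w *m _ *m t alpha i]mulmxA tK ?alpha_neq0 // mulmx1; apply.
by rewrite -mulmxA refl_mx_self ?alpha_neq0 // mulmxN opprK.
Qed.

Lemma sigma_positive w i : inW alpha w -> positive (w *m alpha i) ->
  sigma alpha i w = if i == ord0 then w *m t alpha i else w.
Proof.
move=> Ww wP; have lt_w_wt := ell_t_gt Ww wP.
by rewrite /sigma lt_w_wt ltnNge (ltnW lt_w_wt).
Qed.

Lemma sigma_negative w i : inW alpha w -> positive (- (w *m alpha i)) ->
  sigma alpha i w = if i == ord0 then w else w *m t alpha i.
Proof.
move=> Ww wN; have lt_wt_w := ell_t_lt Ww wN.
by rewrite /sigma lt_wt_w ltnNge (ltnW lt_wt_w).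
Qed.

Lemma inWJ_int_comb J v c :
  ord0 \notin J -> inWJ alpha J v -> int_comb c \in Phi ->
  exists2 d, v *m int_comb c = int_comb d &
    forall k, lift ord0 k \notin J -> d k = c k.
Proof.
move=> J0 [s [Js <-]] cPhi; elim: s Js => [|i s IH] /=.
  by exists c; rewrite ?mul1mx.
case/andP=> iJ /IH [d sd dc].
case: (unliftP ord0 i) iJ => [j ->|->] jJ; last by rewrite jJ in J0.
have [z dz] := cartan_int j (wprod_Phi s cPhi); rewrite sd in dz.
exists (fun k => d k - z *+ (k == j)); first by rewrite -mulmxA sd (t_int_comb dz).
move=> k kJ; have /negbTE -> : k != j by apply: contraNneq kJ => ->.
by rewrite mulr0n subr0 dc.
Qed.

Lemma refl_inWJ J v b : ord0 \notin J -> inWJ alpha J v -> b \in Phi ->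
  positive b -> positive (- (v *m b)) -> inWJ alpha J (refl_mx b).
Proof.
move=> J0 Jv bPhi [c c_ge0 bc] [e e_ge0 vbe].
have [|d vbd dc] := inWJ_int_comb (c := c) J0 Jv; first by rewrite -bc.
have de : d =1 (fun j => - e j).
  by apply: int_comb_inj; rewrite -vbd -bc -int_combN -vbe opprK.
have c_supp k : c k != 0 -> lift ord0 k \in J.
  apply: contraNT => kJ; rewrite -(dc k kJ) eq_le {1}de oppr_le0 e_ge0.
  by rewrite dc ?c_ge0.
have [s [Js sb]] := refl_positive_root_word bPhi c_ge0 bc c_supp.
by exists s.
Qed.

Definition same_sign b g :=
  positive b /\ positive g \/ positive (- b) /\ positive (- g).

Lemma same_sign_or_refl_inWJ J v b :
  ord0 \notin J -> inWJ alpha J v -> b \in Phi ->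
  same_sign b (v *m b) \/ inWJ alpha J (refl_mx b).
Proof.
move=> J0 Jv bPhi.
have vbPhi : v *m b \in Phi by case: Jv => s [_ <-]; apply: wprod_Phi.
have [bP|bN] := positive_or_negative bPhi;
  have [vbP|vbN] := positive_or_negative vbPhi; rewrite /same_sign.
- by left; left.
- by right; apply: (refl_inWJ J0 Jv bPhi bP vbN).
- right; rewrite -refl_mxN; apply: (refl_inWJ J0 Jv (oppr_Phi bPhi) bN).
  by rewrite mulmxN opprK.
- by left; right.
Qed.

Lemma sigma_mull_same_sign i v w : inW alpha w -> inW alpha (v *m w) ->
  same_sign (w *m alpha i) (v *m (w *m alpha i)) ->
  sigma alpha i (v *m w) = v *m sigma alpha i w.
Proof.
move=> Ww Wvw; rewrite mulmxA => -[[wP vwP]|[wN vwN]].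
  by rewrite !sigma_positive //; case: (i == ord0); rewrite ?mulmxA.
by rewrite !sigma_negative //; case: (i == ord0); rewrite ?mulmxA.
Qed.

Lemma same_rcoset_sigma J w w' i :
  ord0 \notin J -> inW alpha w -> inW alpha w' -> same_rcoset alpha J w w' ->
  same_rcoset alpha J (sigma alpha i w) (sigma alpha i w').
Proof.
move=> J0 Ww Ww' ww'.
have [v Jv w'E] : rcosetJ alpha J w w'.
  by apply/ww'; exists 1%:M; [exists [::] | rewrite mul1mx].
rewrite w'E in Ww' ww' *.
have wPhi : w *m alpha i \in Phi by case: Ww => s [_ <-]; apply/wprod_Phi/alpha_Phi.
have [same|Jr] := same_sign_or_refl_inWJ J0 Jv wPhi.
  by rewrite sigma_mull_same_sign //; exact: (same_rcoset_mull alpha_neq0 _ Jv).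
have wt := same_rcoset_mul_t alpha_neq0 Ww Jr.
have vwt : same_rcoset alpha J (v *m w) (v *m w *m t alpha i).
  rewrite -mulmxA; apply: same_rcoset_trans (same_rcoset_sym ww') _.
  exact: same_rcoset_trans wt (same_rcoset_mull alpha_neq0 _ Jv).
apply: same_rcoset_trans (sigma_same_rcoset wt) _.
exact: same_rcoset_trans ww' (same_rcoset_sym (sigma_same_rcoset vwt)).
Qed.

End PositiveRoots.

Theorem proposition5 (R : realFieldType) (n : nat) (Phi : seq 'cV[R]_n)
    (alpha : 'I_n.+1 -> 'cV[R]_n) :
  root_system Phi -> irreducible_rs Phi ->
  simple_system Phi (fun j : 'I_n => alpha (lift ord0 j)) ->
  highest_root Phi (fun j : 'I_n => alpha (lift ord0 j)) (alpha ord0) ->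
  forall (J : {set 'I_n.+1}) (w w' : 'M[R]_n),
    ord0 \notin J -> inW alpha w -> inW alpha w' ->
    same_rcoset alpha J w w' ->
    forall i : 'I_n.+1,
      same_rcoset alpha J (sigma alpha i w) (sigma alpha i w').
Proof.
move=> Phi_root _ alpha_simple alpha0_highest J w w' J0 Ww Ww' ww' i.
exact: (same_rcoset_sigma Phi_root alpha_simple alpha0_highest i J0 Ww Ww' ww').
Qed.
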